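(* Let $t\geq 1$ be an integer, $m=8t+4$ and $n=2^m+1$, and let $x$ be an odd integer. Then: (1) if $1\leq x\leq 2^{4t+2}-1$, $x$ is a coset leader; (2) if $2^{4t+2}+3\leq x\leq 2^{4t+3}-5$, $x$ is a coset leader; (3) if $2^{4t+3}+5\leq x\leq 2^{4t+3}+2^{4t+1}-3$, $x$ is a coset leader; (4) if $2^{4t+3}+2^{4t+1}+3\leq x\leq 2^{4t+3}+2^{4t+2}-3$, $x$ is a coset leader; (5) if $2^{4t+3}+2^{4t+2}+5\leq x\leq 2^{4t+3}+2^{4t+2}+2^{4t+1}-3$, $x$ is a coset leader; (6) if $x=2^{4t+2}+1$, or $2^{4t+3}-3\leq x\leq 2^{4t+3}+3$, or $2^{4t+3}+2^{4t+1}-1\leq x\leq 2^{4t+3}+2^{4t+1}+1$, or $2^{4t+3}+2^{4t+2}-1\leq x\leq 2^{4t+3}+2^{4t+2}+3$, or $2^{4t+3}+2^{4t+2}+2^{4t+1}-1\leq x\leq 2^{4t+3}+2^{4t+2}+2^{4t+1}+1$, then $x$ is not a coset leader.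
   Context: For $n=2^m+1$ and an integer $x$, the 2-cyclotomic coset of $x$ modulo $n$ is $C_x=\{x\cdot 2^{j} \bmod n : j\geq 0\}\subseteq\{0,1,\dots,n-1\}$. For $0\leq x\leq n-1$, ''$x$ is a coset leader'' means that $x$ is the smallest element of $C_x$. *)

From mathcomp Require Import all_boot.
Set Implicit Arguments. Unset Strict Implicit. Unset Printing Implicit Defensive.

Definition in_coset (n x y : nat) : Prop := exists j : nat, y = (x * 2 ^ j) %% n.

(* For 0 <= x <= n-1: x is a coset leader iff x is the smallest element of C_x.
   (x itself belongs to C_x via j = 0 since x < n.) *)
Definition coset_leader (n x : nat) : Prop :=
  x < n /\ forall y, in_coset n x y -> x <= y.

From mathcomp Require Import all_boot zify.

(* Since 2^m = -1 modulo n = 2^m + 1, the coset of x is {+-x 2^i mod n : i < m},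
   so an odd x is a coset leader iff x <= x 2^i mod n <= n - x for every i < m.
   Writing x = q 2^(m-i) + r with r < 2^(m-i), one has x 2^i = r 2^i - q modulo n,
   which makes every residue explicit.  With m = 2e + 4 and d = 2^e, all exponents
   except e + 1, e + 2, e + 3 are harmless for odd x < 16 d - 15; at those three
   exponents the residues are r 2^i - q with q <= 7, and the listed intervals are
   exactly where none of them falls below x or above n - x, while each exceptional
   x has one residue of absolute value smaller than x. *)

Set Implicit Arguments.
Unset Strict Implicit.
Unset Printing Implicit Defensive.

(* [leq_pm n x r]: x <= r and x <= n - r, i.e. x is at most both representatives of +-r mod n. *)
Definition leq_pm (n x r : nat) : bool := (x <= r) && (r + x <= n).

Lemma modn_mulN N A : 0 < A %% (N + 1) -> A * N %% (N + 1) = N + 1 - A %% (N + 1).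
Proof.
have r_lt : A %% (N + 1) < N + 1 by rewrite ltn_pmod // addn1.
rewrite -modnMml; move: (A %% (N + 1)) r_lt => r r_lt r_gt0.
have -> : r * N = r.-1 * (N + 1) + (N + 1 - r) by case: r r_gt0 r_lt => // r _; nia.
by rewrite modnMDl modn_small //; lia.
Qed.

Lemma modn_block N T D q r : T * D = N -> r < D -> q <= r * T ->
  (q * D + r) * T %% (N + 1) = r * T - q.
Proof.
move=> <- rD qrT.
have -> : (q * D + r) * T = q * (T * D + 1) + (r * T - q) by nia.
by rewrite modnMDl modn_small //; nia.
Qed.

Lemma leq_pm_mulN N x A : 0 < x -> leq_pm (N + 1) x (A %% (N + 1)) ->
  leq_pm (N + 1) x (A * N %% (N + 1)).
Proof. by move=> x_gt0 /andP[xA Ax]; rewrite /leq_pm modn_mulN; lia. Qed.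

Section PowerOfTwoPlusOne.

Variable m : nat.
Local Notation n := (2 ^ m + 1).

Lemma coset_leader_of_leq_pm x : 0 < m -> 0 < x < n ->
  (forall i, i < m -> leq_pm n x (x * 2 ^ i %% n)) -> coset_leader n x.
Proof.
move=> m_gt0 /andP[x_gt0 x_lt] small_i; split=> // _ [j ->].
suff /andP[] : leq_pm n x (x * 2 ^ j %% n) by [].
elim/ltn_ind: j => j IH; case: (ltnP j m) => [|m_le_j]; first exact: small_i.
rewrite -(subnK m_le_j) expnD mulnA; apply: leq_pm_mulN => //.
by apply: IH; lia.
Qed.

Lemma not_coset_leader x i : 0 < x * 2 ^ i %% n ->
  ~~ leq_pm n x (x * 2 ^ i %% n) -> ~ coset_leader n x.
Proof.
move=> s_gt0 not_pm [_ leader].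
have x_le_s := leader _ (ex_intro _ i erefl).
have := leader _ (ex_intro _ (i + m) erefl).
by move: not_pm; rewrite /leq_pm expnD mulnA modn_mulN //; lia.
Qed.

Section Block.

Variables (i D x q r : nat).
Hypotheses (iD : 2 ^ i * D = 2 ^ m) (x_block : x = q * D + r) (r_lt_D : r < D).

Lemma leq_pm_block : x + q <= r * 2 ^ i -> r * 2 ^ i + x <= n + q ->
  leq_pm n x (x * 2 ^ i %% n).
Proof.
move=> lo hi; have s_eq : x * 2 ^ i %% n = r * 2 ^ i - q.
  by rewrite x_block (modn_block iD) //; lia.
by rewrite /leq_pm s_eq; lia.
Qed.

Lemma not_coset_leader_block : q < r * 2 ^ i ->
  ~~ leq_pm n x (r * 2 ^ i - q) -> ~ coset_leader n x.
Proof.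
move=> q_lt; have s_eq : x * 2 ^ i %% n = r * 2 ^ i - q.
  by rewrite x_block (modn_block iD) // ltnW.
by rewrite -s_eq; apply: not_coset_leader; rewrite s_eq subn_gt0.
Qed.

End Block.

Lemma pow_split i : i <= m -> 2 ^ i * 2 ^ (m - i) = 2 ^ m.
Proof. by move=> le_im; rewrite -expnD subnKC. Qed.

Lemma leq_pm_small i x : i <= m -> 0 < x < 2 ^ (m - i) ->
  x * (2 ^ i + 1) <= n -> leq_pm n x (x * 2 ^ i %% n).
Proof.
move=> le_im /andP[x_gt0 x_lt]; rewrite mulnDr muln1 => bound.
apply: (leq_pm_block (pow_split le_im) (q := 0) (r := x)); rewrite ?addn0 //.
by rewrite leq_pmulr // expn_gt0.
Qed.

Lemma leq_pm_large i x : i < m -> odd x -> x * (2 ^ (m - i) + 1) <= 2 ^ m ->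
  x <= 2 ^ i -> leq_pm n x (x * 2 ^ i %% n).
Proof.
move=> lt_im x_odd; rewrite mulnDr muln1 => bound x_le.
have r_odd : odd (x %% 2 ^ (m - i)).
  by rewrite odd_mod // oddX subn_eq0 leqNgt lt_im orbF.
have iD := pow_split (ltnW lt_im); rewrite -iD in bound.
have D_gt0 : 0 < 2 ^ (m - i) by rewrite expn_gt0.
move: (2 ^ (m - i)) iD bound r_odd D_gt0 => D iD bound r_odd D_gt0.
have r_lt : x %% D < D by rewrite ltn_mod.
have r_gt0 : 0 < x %% D by case: (x %% D) r_odd.
apply: (leq_pm_block iD (divn_eq x D) r_lt).
- have qD_le : x %/ D * D <= x by rewrite leq_divM.
  have : (x + x %/ D) * D <= 2 ^ i * D by rewrite mulnDl; lia.
  rewrite leq_pmul2r // => le_T.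
  by apply: (leq_trans le_T); rewrite leq_pmull.
- have : (x %% D).+1 * 2 ^ i <= D * 2 ^ i by rewrite leq_mul2r r_lt orbT.
  rewrite mulSn [D * _]mulnC iD; move: (x %% D) (x %/ D) => r q; lia.
Qed.

End PowerOfTwoPlusOne.

Section SquareModulus.

(* [d] stands for [2 ^ e] but is kept opaque so that [lia] and [nia] treat it as an atom. *)
Variables e d : nat.
Hypotheses (e_ge4 : 4 <= e) (pow_e : 2 ^ e = d).

Local Notation m := (2 * e + 4).
Local Notation n := (2 ^ m + 1).

Lemma d_ge16 : 16 <= d.
Proof. by rewrite -pow_e (_ : 16 = 2 ^ 4) // leq_exp2l. Qed.

Lemma pow_modulus : 2 ^ m = 16 * d * d.
Proof. by rewrite -pow_e (_ : 16 = 2 ^ 4) // -!expnD; congr (2 ^ _); lia. Qed.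

Lemma pow_mid k : 2 ^ (e + k) = 2 ^ k * d.
Proof. by rewrite expnD pow_e mulnC. Qed.

Lemma pow_mid_compl k j : k + j = 4 -> 2 ^ (m - (e + k)) = 2 ^ j * d.
Proof. by move=> kj; rewrite -pow_e -expnD; congr (2 ^ _); lia. Qed.

Lemma pow_mid_split k j : k + j = 4 -> 2 ^ (e + k) * (2 ^ j * d) = 2 ^ m.
Proof. by move=> kj; rewrite -(pow_mid_compl kj) pow_split //; lia. Qed.

Lemma leq_pm_outer x i : odd x -> x <= 16 * d - 16 -> i < m ->
  (i <= e) || (e + 4 <= i) -> leq_pm n x (x * 2 ^ i %% n).
Proof.
move=> x_odd x_le lt_im /orP[le_ie | le_ei].
- have pow_i : 2 ^ i <= d by rewrite -pow_e leq_exp2l.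
  have pow_mi : 16 * d <= 2 ^ (m - i).
    by rewrite -pow_e (_ : 16 = 2 ^ 4) // -expnD leq_exp2l //; lia.
  apply: leq_pm_small; first exact: ltnW.
  + by apply/andP; split; [case: (x) x_odd | have := d_ge16; lia].
  + have := leq_mul x_le (leq_add pow_i (leqnn 1)).
    rewrite pow_modulus; have := d_ge16; nia.
- have pow_i : 16 * d <= 2 ^ i.
    by rewrite -pow_e (_ : 16 = 2 ^ 4) // -expnD leq_exp2l //; lia.
  have pow_mi : 2 ^ (m - i) <= d by rewrite -pow_e leq_exp2l //; lia.
  apply: leq_pm_large => //; last by lia.
  have := leq_mul x_le (leq_add pow_mi (leqnn 1)).
  rewrite pow_modulus; have := d_ge16; nia.
Qed.

Lemma coset_leader_of_middle x : odd x -> x <= 16 * d - 16 ->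
  leq_pm n x (x * 2 ^ (e + 1) %% n) -> leq_pm n x (x * 2 ^ (e + 2) %% n) ->
  leq_pm n x (x * 2 ^ (e + 3) %% n) -> coset_leader n x.
Proof.
move=> x_odd x_le pm1 pm2 pm3.
have x_gt0 : 0 < x by case: (x) x_odd.
apply: coset_leader_of_leq_pm; first lia.
  by rewrite x_gt0 pow_modulus /=; have := d_ge16; nia.
move=> i lt_im.
have [le_ie|lt_ei] := leqP i e; first by apply: leq_pm_outer => //; rewrite le_ie.
have [le_ei|lt_ie] := leqP (e + 4) i.
  by apply: leq_pm_outer => //; rewrite le_ei orbT.
have /or3P[] : [|| i == e + 1, i == e + 2 | i == e + 3] by lia.
all: by move/eqP->.
Qed.

Lemma coset_leader_lower x q r : odd x -> x <= 8 * d - 4 ->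
  x = q * (4 * d) + r -> q < r -> r + q < 4 * d -> coset_leader n x.
Proof.
move=> x_odd x_le x_block q_lt_r rq_lt; have d16 := d_ge16.
have x_gt0 : 0 < x by case: (x) x_odd.
apply: coset_leader_of_middle => //; first lia.
- apply: leq_pm_small; rewrite ?(@pow_mid_compl 1 3) // ?pow_mid ?pow_modulus.
  + by lia.
  + by rewrite x_gt0 /=; lia.
  + by nia.
- apply: (leq_pm_block (@pow_mid_split 2 2 erefl) x_block);
    by rewrite ?pow_mid ?pow_modulus; nia.
- apply: leq_pm_large; rewrite ?(@pow_mid_compl 3 1) // ?pow_mid ?pow_modulus.
  + by lia.
  + by nia.
  + by lia.
Qed.

Lemma coset_leader_upper x q2 r2 q3 r3 : odd x -> 8 * d + 5 <= x <= 14 * d ->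
  x = q2 * (4 * d) + r2 -> q2 < r2 -> r2 + q2 < 4 * d ->
  x = q3 * (2 * d) + r3 -> 2 <= r3 -> r3 + 3 <= 2 * d -> coset_leader n x.
Proof.
move=> x_odd /andP[x_ge x_le] x_block2 q_lt_r rq_lt x_block3 r3_ge r3_le.
have d16 := d_ge16.
have [r1 x_block1] : exists r1, x = 1 * (2 ^ 3 * d) + r1 by exists (x - 8 * d); lia.
apply: coset_leader_of_middle => //; first lia.
- apply: (leq_pm_block (@pow_mid_split 1 3 erefl) x_block1);
    by rewrite ?pow_mid ?pow_modulus; nia.
- apply: (leq_pm_block (@pow_mid_split 2 2 erefl) x_block2);
    by rewrite ?pow_mid ?pow_modulus; nia.
- apply: (leq_pm_block (@pow_mid_split 3 1 erefl) x_block3);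
    by rewrite ?pow_mid ?pow_modulus; nia.
Qed.

Lemma not_coset_leader_mid k j x q r : k + j = 4 -> x = q * (2 ^ j * d) + r ->
  r < 2 ^ j * d -> q < r * (2 ^ k * d) ->
  ~~ leq_pm (16 * d * d + 1) x (r * (2 ^ k * d) - q) -> ~ coset_leader n x.
Proof.
move=> kj x_block r_lt; rewrite -pow_modulus -(pow_mid k).
exact: (not_coset_leader_block (pow_mid_split kj) x_block).
Qed.

Lemma not_coset_leader_exceptional x : odd x ->
  x = 4 * d + 1 \/ (8 * d - 3 <= x <= 8 * d + 3) \/ (10 * d - 1 <= x <= 10 * d + 1) \/
  (12 * d - 1 <= x <= 12 * d + 3) \/ (14 * d - 1 <= x <= 14 * d + 1) ->
  ~ coset_leader n x.
Proof.
move=> x_odd x_cases; have d16 := d_ge16.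
have x_half : x = x./2 * 2 + 1 by rewrite -[x in LHS]odd_double_half x_odd addnC -muln2.
move: (x./2) x_half => y x_half.
case: x_cases => [-> | [/andP[lo hi] | [/andP[lo hi] | [/andP[lo hi] | /andP[lo hi]]]]].
- by apply: (@not_coset_leader_mid 2 2 _ 1 1); rewrite /leq_pm; nia.
- have : x = 8 * d - 3 \/ x = 8 * d - 1 \/ x = 8 * d + 1 \/ x = 8 * d + 3 by lia.
  case=> [|[|[|]]] ->.
  + by apply: (@not_coset_leader_mid 1 3 _ 0 (8 * d - 3)); rewrite /leq_pm; nia.
  + by apply: (@not_coset_leader_mid 1 3 _ 0 (8 * d - 1)); rewrite /leq_pm; nia.
  + by apply: (@not_coset_leader_mid 1 3 _ 1 1); rewrite /leq_pm; nia.
  + by apply: (@not_coset_leader_mid 1 3 _ 1 3); rewrite /leq_pm; nia.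
- have : x = 10 * d - 1 \/ x = 10 * d + 1 by lia.
  case=> ->.
  + by apply: (@not_coset_leader_mid 3 1 _ 4 (2 * d - 1)); rewrite /leq_pm; nia.
  + by apply: (@not_coset_leader_mid 3 1 _ 5 1); rewrite /leq_pm; nia.
- have : x = 12 * d - 1 \/ x = 12 * d + 1 \/ x = 12 * d + 3 by lia.
  case=> [|[|]] ->.
  + by apply: (@not_coset_leader_mid 2 2 _ 2 (4 * d - 1)); rewrite /leq_pm; nia.
  + by apply: (@not_coset_leader_mid 2 2 _ 3 1); rewrite /leq_pm; nia.
  + by apply: (@not_coset_leader_mid 2 2 _ 3 3); rewrite /leq_pm; nia.
- have : x = 14 * d - 1 \/ x = 14 * d + 1 by lia.
  case=> ->.
  + by apply: (@not_coset_leader_mid 3 1 _ 6 (2 * d - 1)); rewrite /leq_pm; nia.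
  + by apply: (@not_coset_leader_mid 3 1 _ 7 1); rewrite /leq_pm; nia.
Qed.

End SquareModulus.

Theorem theorem5p1 (t : nat) (ht : 1 <= t) (x : nat) (hodd : odd x) :
  let m := 8 * t + 4 in
  let n := 2 ^ m + 1 in
  let a := 2 ^ (4 * t + 1) in
  let b := 2 ^ (4 * t + 2) in
  let c := 2 ^ (4 * t + 3) in
  ((1 <= x <= b - 1) -> coset_leader n x) /\
  ((b + 3 <= x <= c - 5) -> coset_leader n x) /\
  ((c + 5 <= x <= c + a - 3) -> coset_leader n x) /\
  ((c + a + 3 <= x <= c + b - 3) -> coset_leader n x) /\
  ((c + b + 5 <= x <= c + b + a - 3) -> coset_leader n x) /\
  ((x = b + 1 \/ (c - 3 <= x <= c + 3) \/ (c + a - 1 <= x <= c + a + 1)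
    \/ (c + b - 1 <= x <= c + b + 3) \/ (c + b + a - 1 <= x <= c + b + a + 1))
   -> ~ coset_leader n x).
Proof.
move=> m n a b c.
have e_ge4 : 4 <= 4 * t by lia.
set d := 2 ^ (4 * t); have pow_e : 2 ^ (4 * t) = d by [].
have d16 := d_ge16 e_ge4 pow_e.
rewrite /n /m (_ : 8 * t + 4 = 2 * (4 * t) + 4); last lia.
rewrite /a /b /c !(pow_mid pow_e).
rewrite (_ : 2 ^ 1 = 2) // (_ : 2 ^ 2 = 4) // (_ : 2 ^ 3 = 8) //.
split; [|split; [|split; [|split; [|split]]]] => x_range.
- by apply: (coset_leader_lower e_ge4 pow_e (q := 0) (r := x)); lia.
- by apply: (coset_leader_lower e_ge4 pow_e (q := 1) (r := x - 4 * d)); lia.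
- by apply: (coset_leader_upper e_ge4 pow_e (q2 := 2) (r2 := x - 8 * d)
                                           (q3 := 4) (r3 := x - 8 * d)); lia.
- by apply: (coset_leader_upper e_ge4 pow_e (q2 := 2) (r2 := x - 8 * d)
                                           (q3 := 5) (r3 := x - 10 * d)); lia.
- by apply: (coset_leader_upper e_ge4 pow_e (q2 := 3) (r2 := x - 12 * d)
                                           (q3 := 6) (r3 := x - 12 * d)); lia.
- by apply: (not_coset_leader_exceptional e_ge4 pow_e); lia.
Qed.
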